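(* Let $(\beta_n),(\gamma_n)$ be sequences of positive real numbers that are non-decreasing, satisfy $\gamma_n\ge\beta_n$ for all $n$ and $\gamma_n-\beta_n\to\infty$. Let $t=(t_n)$ be a sequence of positive real numbers with $T_{\beta\gamma(n)}:=\sum_{k\in[\beta_n,\gamma_n]}t_k\to\infty$ as $n\to\infty$ (the sum being over positive integers $k$ in $[\beta_n,\gamma_n]$). For $\theta\in(0,1]$, say that a sequence $(\hat f_k)$ of fuzzy functions $\hat f_k:[a,b]\to L(\mathbb R)$ belongs to $N^{\theta}_{\beta\gamma}(t)$ (with limit $\hat f:[a,b]\to L(\mathbb R)$) if for every $x\in[a,b]$, $$\frac{1}{T_{\beta\gamma(n)}^{\theta}}\sum_{k\in[\beta_n,\gamma_n]}t_k\,d(\hat f_k(x),\hat f(x))\to 0\quad (n\to\infty).$$ Then: (i) If $(\hat f_k)\in N^{\theta}_{\beta\gamma}(t)$ with limit $\hat f$ and $(\hat g_k)\in N^{\theta}_{\beta\gamma}(t)$ with limit $\hat g$, then $(\hat f_k+\hat g_k)\in N^{\theta}_{\beta\gamma}(t)$ (with limit $\hat f+\hat g$) and $(c\hat f_k)\in N^{\theta}_{\beta\gamma}(t)$ (with limit $c\hat f$) for every $c\in\mathbb R$. (ii) If $0<\theta\le\delta\le1$, then $N^{\theta}_{\beta\gamma}(t)\subseteq N^{\delta}_{\beta\gamma}(t)$; moreover, the inclusion is strict for some $\theta<\delta$.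
   Context: $L(\mathbb R)$ denotes the set of fuzzy real numbers: maps $\hat x:\mathbb R\to[0,1]$ that are normal, fuzzy convex, upper semicontinuous, with $\{t:\hat x(t)>0\}$ having compact closure. For $\alpha\in(0,1]$ the $\alpha$-cut is $[\hat x]_\alpha=\{t:\hat x(t)\ge\alpha\}=[(\hat x)^-_\alpha,(\hat x)^+_\alpha]$. The metric on $L(\mathbb R)$ is $d(\hat x,\hat y)=\sup_{0\le\alpha\le1}\max\{|(\hat x)^-_\alpha-(\hat y)^-_\alpha|,|(\hat x)^+_\alpha-(\hat y)^+_\alpha|\}$. Addition and real scalar multiplication of fuzzy numbers are the usual ones (via $\alpha$-cuts). A fuzzy function on $[a,b]$ is a map $[a,b]\to L(\mathbb R)$; operations on fuzzy functions are pointwise. *)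

From Stdlib Require Import Reals Lra ZArith.
From Coquelicot Require Import Coquelicot.
Open Scope R_scope.

(* u is a fuzzy real number (an element of L(R)): values in [0,1], normal,
   fuzzy convex, upper semicontinuous, and with {t | u t > 0} bounded
   (in R, its closure is compact iff it is bounded). *)
Definition is_fuzzy (u : R -> R) : Prop :=
  (forall t, 0 <= u t <= 1) /\
  (exists t, u t = 1) /\
  (forall s v l, 0 <= l <= 1 -> Rmin (u s) (u v) <= u (l * s + (1 - l) * v)) /\
  (forall t eps, 0 < eps -> exists del, 0 < del /\
      forall s, Rabs (s - t) < del -> u s < u t + eps) /\
  (exists M, forall t, 0 < u t -> Rabs t <= M).

(* alpha-cut: for alpha > 0, {t | u t >= alpha}; for alpha = 0 we use the
   support {t | u t > 0}, which has the same inf and sup as its closure [u]_0. *)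
Definition cut (u : R -> R) (alpha : R) (t : R) : Prop :=
  (0 < alpha /\ alpha <= u t) \/ (alpha <= 0 /\ 0 < u t).

Definition lower (u : R -> R) (alpha : R) : R := real (Glb_Rbar (cut u alpha)).
Definition upper (u : R -> R) (alpha : R) : R := real (Lub_Rbar (cut u alpha)).

Definition fdist (u v : R -> R) : R :=
  real (Lub_Rbar (fun r => exists alpha, 0 <= alpha <= 1 /\
     r = Rmax (Rabs (lower u alpha - lower v alpha))
              (Rabs (upper u alpha - upper v alpha)))).

(* addition via alpha-cuts: [u+v]_alpha = [u^-_a + v^-_a, u^+_a + v^+_a];
   the membership function is recovered as sup{alpha | t in the cut} (or 0). *)
Definition fadd (u v : R -> R) (t : R) : R :=
  real (Lub_Rbar (fun alpha => alpha = 0 \/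
     (0 < alpha <= 1 /\
      lower u alpha + lower v alpha <= t <= upper u alpha + upper v alpha))).

Definition fscal (c : R) (u : R -> R) (t : R) : R :=
  real (Lub_Rbar (fun alpha => alpha = 0 \/
     (0 < alpha <= 1 /\
      Rmin (c * lower u alpha) (c * upper u alpha) <= t /\
      t <= Rmax (c * lower u alpha) (c * upper u alpha)))).

Definition in_window (beta gamma : nat -> R) (n k : nat) : bool :=
  if Rle_dec (beta n) (INR k) then
    if Rle_dec (INR k) (gamma n) then Nat.ltb 0 k else false
  else false.

(* sum_{k positive integer in [beta n, gamma n]} g k ;
   all such k are <= Z.to_nat (up (gamma n)). *)
Definition wsum (beta gamma : nat -> R) (g : nat -> R) (n : nat) : R :=
  sum_f_R0 (fun k => if in_window beta gamma n k then g k else 0)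
           (Z.to_nat (up (gamma n))).

Definition Tbg (beta gamma t : nat -> R) (n : nat) : R := wsum beta gamma t n.

(* A fuzzy function on [a,b] is a map R -> (R -> R) whose values at points of
   [a,b] are fuzzy numbers (values outside [a,b] are irrelevant). *)
Definition InN (theta : R) (beta gamma t : nat -> R) (a b : R)
    (fs : nat -> R -> R -> R) (f : R -> R -> R) : Prop :=
  (forall k x, a <= x <= b -> is_fuzzy (fs k x)) /\
  (forall x, a <= x <= b -> is_fuzzy (f x)) /\
  (forall x, a <= x <= b ->
     is_lim_seq (fun n => / Rpower (Tbg beta gamma t n) theta *
                   wsum beta gamma (fun k => t k * fdist (fs k x) (f x)) n) 0).

From Stdlib Require Import Reals Lra Lia ZArith Classical.
From Coquelicot Require Import Coquelicot.
Open Scope R_scope.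

(* (i) and the inclusion in (ii) are termwise estimates inside the weighted means
   T_n^(-theta) * sum t_k d_k.  The alpha-cut endpoints of f + g and c f are sums and
   scalings of those of f, g, so d(f_k + g_k, f + g) <= d(f_k, f) + d(g_k, g) and
   d(c f_k, c f) <= |c| d(f_k, f); and T_n^(-delta) <= T_n^(-theta) once T_n >= 1.
   For strictness take theta = 1/2, delta = 1 and the crisp numbers e_k, where e_k is
   the largest weight 1/sqrt(T_n) over the windows containing k.  As gamma is
   non-decreasing, only late windows contain large k, so e_k -> 0 and the e_k tend
   to 0 in N^1.  A limit g in N^(1/2) would also be a limit in N^1, which forces the
   left end of the support of g to be 0; then d(e_k, g) >= e_k >= 1/sqrt(T_n) on the
   n-th window, and the N^(1/2) mean is at least 1. *)

Section BoundedLub.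
Variables (E : R -> Prop) (x0 B : R).
Hypotheses (E_x0 : E x0) (E_le_B : forall r, E r -> r <= B).

Lemma is_lub_Rbar_real : is_lub_Rbar E (real (Lub_Rbar E)).
Proof.
  destruct (Lub_Rbar_correct E) as [ub least].
  pose proof (ub x0 E_x0) as x0_le. pose proof (least (Finite B) E_le_B) as le_B.
  destruct (Lub_Rbar E); simpl in *; try contradiction. split; assumption.
Qed.

Lemma real_Lub_Rbar_ub r : E r -> r <= real (Lub_Rbar E).
Proof. exact (proj1 is_lub_Rbar_real r). Qed.

Lemma real_Lub_Rbar_least M : (forall r, E r -> r <= M) -> real (Lub_Rbar E) <= M.
Proof. exact (proj2 is_lub_Rbar_real (Finite M)). Qed.

Lemma real_Lub_Rbar_approx e : 0 < e -> exists r, E r /\ real (Lub_Rbar E) - e < r.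
Proof.
  intros He. apply NNPP. intros none.
  enough (real (Lub_Rbar E) <= real (Lub_Rbar E) - e) by lra.
  apply real_Lub_Rbar_least. intros r Er. apply Rnot_lt_le. intros lt. apply none. eauto.
Qed.
End BoundedLub.

Section BoundedGlb.
Variables (E : R -> Prop) (x0 B : R).
Hypotheses (E_x0 : E x0) (B_le_E : forall r, E r -> B <= r).

Lemma is_glb_Rbar_real : is_glb_Rbar E (real (Glb_Rbar E)).
Proof.
  destruct (Glb_Rbar_correct E) as [lb greatest].
  pose proof (lb x0 E_x0) as le_x0. pose proof (greatest (Finite B) B_le_E) as B_le.
  destruct (Glb_Rbar E); simpl in *; try contradiction. split; assumption.
Qed.

Lemma real_Glb_Rbar_lb r : E r -> real (Glb_Rbar E) <= r.
Proof. exact (proj1 is_glb_Rbar_real r). Qed.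

Lemma real_Glb_Rbar_greatest M : (forall r, E r -> M <= r) -> M <= real (Glb_Rbar E).
Proof. exact (proj2 is_glb_Rbar_real (Finite M)). Qed.

Lemma real_Glb_Rbar_approx e : 0 < e -> exists r, E r /\ r < real (Glb_Rbar E) + e.
Proof.
  intros He. apply NNPP. intros none.
  enough (real (Glb_Rbar E) + e <= real (Glb_Rbar E)) by lra.
  apply real_Glb_Rbar_greatest. intros r Er. apply Rnot_lt_le. intros lt. apply none. eauto.
Qed.
End BoundedGlb.

Lemma real_Lub_Rbar_eq E x : (forall y, E y -> y <= x) ->
  (forall e, 0 < e -> exists y, E y /\ x - e < y) -> real (Lub_Rbar E) = x.
Proof.
  intros ub approx. destruct (approx 1 Rlt_0_1) as [y0 [Ey0 _]].
  apply Rle_antisym; [exact (real_Lub_Rbar_least E y0 x Ey0 ub x ub)|].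
  apply Rnot_lt_le. intros lt.
  destruct (approx (x - real (Lub_Rbar E))) as [y [Ey gt]]; [lra|].
  pose proof (real_Lub_Rbar_ub E y0 x Ey0 ub y Ey). lra.
Qed.

Lemma real_Glb_Rbar_eq E x : (forall y, E y -> x <= y) ->
  (forall e, 0 < e -> exists y, E y /\ y < x + e) -> real (Glb_Rbar E) = x.
Proof.
  intros lb approx. destruct (approx 1 Rlt_0_1) as [y0 [Ey0 _]].
  apply Rle_antisym; [|exact (real_Glb_Rbar_greatest E y0 x Ey0 lb x lb)].
  apply Rnot_lt_le. intros lt.
  destruct (approx (real (Glb_Rbar E) - x)) as [y [Ey gt]]; [lra|].
  pose proof (real_Glb_Rbar_lb E y0 x Ey0 lb y Ey). lra.
Qed.

(** * Fuzzy numbers and their alpha-cut endpoints *)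

(* The endpoint functions of the alpha-cuts of fuzzy numbers are exactly these
   (Goetschel-Voxman); level 0 is the closure of the union of the positive levels. *)
Record cut_family (L U : R -> R) : Prop := {
  cut_family_nested : forall a b, 0 <= a -> a <= b -> b <= 1 -> L a <= L b /\ U b <= U a;
  cut_family_core : L 1 <= U 1;
  cut_family_left_cont : forall a, 0 < a <= 1 -> forall e, 0 < e ->
    exists b, 0 < b < a /\ L a - e < L b /\ U b < U a + e;
  cut_family_support : forall e, 0 < e ->
    exists b, 0 < b <= 1 /\ L b < L 0 + e /\ U 0 - e < U b }.

Definition level_set (L U : R -> R) (x a : R) : Prop :=
  a = 0 \/ (0 < a <= 1 /\ L a <= x <= U a).

(* [fadd] and [fscal] are [membership] of the summed and scaled endpoint functions. *)
Definition membership (L U : R -> R) (x : R) : R := real (Lub_Rbar (level_set L U x)).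

Section Membership.
Variables L U : R -> R.

Lemma level_set_0 x : level_set L U x 0.
Proof. now left. Qed.

Lemma level_set_le_1 x a : level_set L U x a -> a <= 1.
Proof. intros [-> | [[_ a_le] _]]; lra. Qed.

Lemma membership_ge x a : level_set L U x a -> a <= membership L U x.
Proof. apply (real_Lub_Rbar_ub _ 0 1 (level_set_0 x) (level_set_le_1 x)). Qed.

Lemma membership_range x : 0 <= membership L U x <= 1.
Proof.
  split; [apply membership_ge, level_set_0|].
  apply (real_Lub_Rbar_least _ 0 1 (level_set_0 x) (level_set_le_1 x)), level_set_le_1.
Qed.

Hypothesis LU : cut_family L U.

Lemma cut_family_bounds a : 0 <= a <= 1 -> L 0 <= L a /\ L a <= U a /\ U a <= U 0.
Proof.
  intros Ha.
  destruct (cut_family_nested _ _ LU 0 a) as [L0 U0]; try lra.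
  destruct (cut_family_nested _ _ LU a 1) as [L1 U1]; try lra.
  pose proof (cut_family_core _ _ LU). lra.
Qed.

Lemma membership_gt x b : 0 < b <= 1 -> b < membership L U x -> L b <= x <= U b.
Proof.
  intros Hb lt.
  destruct (real_Lub_Rbar_approx _ 0 1 (level_set_0 x) (level_set_le_1 x)
              (membership L U x - b)) as [a [[-> | [Ha Hx]] gt]]; fold (membership L U x) in *;
    [lra | lra |].
  destruct (cut_family_nested _ _ LU b a) as [Lba Uab]; lra.
Qed.

Lemma membership_ge_iff x a : 0 < a <= 1 -> (a <= membership L U x <-> L a <= x <= U a).
Proof.
  intros Ha. split; [|intros Hx; apply membership_ge; right; auto].
  intros le. split; apply Rnot_lt_le; intros out.
  - destruct (cut_family_left_cont _ _ LU a Ha (L a - x)) as [b [Hb [Lb _]]]; [lra|].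
    pose proof (membership_gt x b ltac:(lra) ltac:(lra)). lra.
  - destruct (cut_family_left_cont _ _ LU a Ha (x - U a)) as [b [Hb [_ Ub]]]; [lra|].
    pose proof (membership_gt x b ltac:(lra) ltac:(lra)). lra.
Qed.

Lemma membership_pos_iff x :
  0 < membership L U x <-> exists b, 0 < b <= 1 /\ L b <= x <= U b.
Proof.
  split.
  - intros pos. pose proof (membership_range x).
    exists (membership L U x / 2). split; [lra|]. apply membership_gt; lra.
  - intros [b [Hb Hx]]. enough (b <= membership L U x) by lra.
    apply membership_ge. right. auto.
Qed.

Lemma membership_quasiconcave s v l : 0 <= l <= 1 ->
  Rmin (membership L U s) (membership L U v) <= membership L U (l * s + (1 - l) * v).
Proof.
  intros Hl. set (w := l * s + (1 - l) * v). apply Rnot_lt_le. intros lt.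
  pose proof (membership_range w). pose proof (membership_range s).
  pose proof (Rmin_l (membership L U s) (membership L U v)).
  pose proof (Rmin_r (membership L U s) (membership L U v)).
  set (b := (membership L U w + Rmin (membership L U s) (membership L U v)) / 2) in *.
  assert (Hs : L b <= s <= U b) by (apply membership_gt; unfold b; lra).
  assert (Hv : L b <= v <= U b) by (apply membership_gt; unfold b; lra).
  assert (Hw : L b <= w <= U b) by (unfold w; split; nra).
  assert (b <= membership L U w)
    by (apply membership_ge; right; split; [unfold b; lra | exact Hw]).
  unfold b in *. lra.
Qed.

Lemma membership_usc x e : 0 < e -> exists del, 0 < del /\
  forall s, Rabs (s - x) < del -> membership L U s < membership L U x + e.
Proof.
  intros He. pose proof (membership_range x).
  set (b := membership L U x + e / 2).
  destruct (Rle_dec 1 b) as [b_ge | b_lt].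
  - exists 1. split; [lra|]. intros s _. pose proof (membership_range s). unfold b in *. lra.
  - assert (Hx : ~ (L b <= x <= U b)).
    { intros Hx. apply membership_ge_iff in Hx; unfold b in *; lra. }
    assert (below : forall s, b < membership L U s -> L b <= s <= U b)
      by (intros s; apply membership_gt; unfold b in *; lra).
    destruct (Rlt_dec x (L b)).
    + exists (L b - x). split; [lra|]. intros s Hs. apply Rabs_def2 in Hs.
      destruct (Rle_dec (membership L U s) b) as [|gt]; [unfold b in *; lra|].
      apply Rnot_le_lt, below in gt. lra.
    + exists (x - U b). split; [lra|]. intros s Hs. apply Rabs_def2 in Hs.
      destruct (Rle_dec (membership L U s) b) as [|gt]; [unfold b in *; lra|].
      apply Rnot_le_lt, below in gt. lra.
Qed.

Lemma membership_fuzzy : is_fuzzy (membership L U).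
Proof.
  split; [exact membership_range|]. split; [|split; [|split]].
  - exists (L 1). apply Rle_antisym; [apply membership_range|].
    apply membership_ge. right. pose proof (cut_family_core _ _ LU). lra.
  - exact membership_quasiconcave.
  - exact membership_usc.
  - exists (Rabs (L 0) + Rabs (U 0)). intros x [b [Hb Hx]]%membership_pos_iff.
    destruct (cut_family_bounds b) as (? & ? & ?); [lra|].
    unfold Rabs. repeat destruct Rcase_abs; lra.
Qed.

Lemma cut_membership x a : 0 <= a <= 1 ->
  cut (membership L U) a x <-> exists b, 0 < b <= 1 /\ a <= b /\ L b <= x <= U b.
Proof.
  intros Ha. unfold cut. split.
  - intros [[a_pos le] | [a_0 pos]].
    + exists a. split; [lra|]. split; [lra|]. apply membership_ge_iff; [lra | exact le].
    + apply membership_pos_iff in pos as [b [Hb Hx]].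
      exists b. split; [lra|]. split; [lra | exact Hx].
  - intros [b [Hb [ab Hx]]]. assert (b <= membership L U x) by (apply membership_ge; right; auto).
    destruct (Rlt_le_dec 0 a); [left | right]; lra.
Qed.

Lemma membership_endpoints a : 0 <= a <= 1 ->
  lower (membership L U) a = L a /\ upper (membership L U) a = U a.
Proof.
  intros Ha. pose proof (cut_family_bounds a Ha).
  assert (cut_in : forall x, cut (membership L U) a x -> L a <= x <= U a).
  { intros x [b [Hb [ab Hx]]]%cut_membership; [|exact Ha].
    destruct (cut_family_nested _ _ LU a b); lra. }
  assert (near_ends : forall e, 0 < e ->
    exists b, 0 < b <= 1 /\ a <= b /\ L b < L a + e /\ U a - e < U b).
  { intros e He. destruct (Rlt_le_dec 0 a).
    - exists a. lra.
    - destruct (cut_family_support _ _ LU e He) as [b Hb]. exists b. replace a with 0 by lra. lra. }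
  unfold lower, upper. split.
  - apply real_Glb_Rbar_eq; [intros x Hx; apply cut_in, Hx|].
    intros e He. destruct (near_ends e He) as [b (Hb & ab & Lb & _)].
    exists (L b). split; [|lra]. apply cut_membership; [exact Ha|].
    exists b. pose proof (cut_family_bounds b). lra.
  - apply real_Lub_Rbar_eq; [intros x Hx; apply cut_in, Hx|].
    intros e He. destruct (near_ends e He) as [b (Hb & ab & _ & Ub)].
    exists (U b). split; [|lra]. apply cut_membership; [exact Ha|].
    exists b. pose proof (cut_family_bounds b). lra.
Qed.
End Membership.

Lemma Rle_of_forall_lt_le a x : 0 < a -> (forall b, 0 < b < a -> b <= x) -> a <= x.
Proof.
  intros Ha below. apply Rnot_lt_le. intros lt.
  destruct (Rle_lt_dec x 0).
  - pose proof (below (a / 2) ltac:(lra)). lra.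
  - pose proof (below ((x + a) / 2) ltac:(lra)). lra.
Qed.

Section FuzzyNumber.
Variable u : R -> R.
Hypothesis u_fuzzy : is_fuzzy u.

Lemma cut_antitone a b x : 0 <= a -> a <= b -> cut u b x -> cut u a x.
Proof.
  unfold cut. intros Ha ab [[b_pos le] | [b_0 pos]]; [|right; lra].
  destruct (Rlt_le_dec 0 a); [left | right]; lra.
Qed.

Lemma cut_bounded : exists M, forall a x, 0 <= a -> cut u a x -> - M <= x <= M.
Proof.
  destruct u_fuzzy as (_ & _ & _ & _ & M & HM). exists M.
  intros a x Ha Hx. apply Rabs_le_between, HM. destruct Hx; lra.
Qed.

Lemma cut_nonempty a : a <= 1 -> exists x, cut u a x.
Proof.
  destruct u_fuzzy as (_ & [x Hx] & _). intros Ha. exists x. unfold cut.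
  destruct (Rlt_le_dec 0 a); [left | right]; lra.
Qed.

Lemma cut_bounds a : 0 <= a <= 1 ->
  exists x0 M, cut u a x0 /\ forall x, cut u a x -> - M <= x <= M.
Proof.
  intros Ha. destruct (cut_nonempty a) as [x0 Hx0]; [lra|]. destruct cut_bounded as [M HM].
  exists x0, M. split; [exact Hx0|]. intros x. apply HM. lra.
Qed.

Lemma lower_le a x : 0 <= a <= 1 -> cut u a x -> lower u a <= x.
Proof.
  intros Ha. destruct (cut_bounds a Ha) as (x0 & M & Hx0 & HM).
  apply (real_Glb_Rbar_lb _ x0 (- M) Hx0). intros r Hr. apply HM, Hr.
Qed.

Lemma le_upper a x : 0 <= a <= 1 -> cut u a x -> x <= upper u a.
Proof.
  intros Ha. destruct (cut_bounds a Ha) as (x0 & M & Hx0 & HM).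
  apply (real_Lub_Rbar_ub _ x0 M Hx0). intros r Hr. apply HM, Hr.
Qed.

Lemma lower_greatest a m : 0 <= a <= 1 -> (forall x, cut u a x -> m <= x) -> m <= lower u a.
Proof.
  intros Ha. destruct (cut_bounds a Ha) as (x0 & M & Hx0 & HM).
  apply (real_Glb_Rbar_greatest _ x0 (- M) Hx0). intros r Hr. apply HM, Hr.
Qed.

Lemma upper_least a m : 0 <= a <= 1 -> (forall x, cut u a x -> x <= m) -> upper u a <= m.
Proof.
  intros Ha. destruct (cut_bounds a Ha) as (x0 & M & Hx0 & HM).
  apply (real_Lub_Rbar_least _ x0 M Hx0). intros r Hr. apply HM, Hr.
Qed.

Lemma lower_approx a e : 0 <= a <= 1 -> 0 < e -> exists x, cut u a x /\ x < lower u a + e.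
Proof.
  intros Ha. destruct (cut_bounds a Ha) as (x0 & M & Hx0 & HM).
  apply (real_Glb_Rbar_approx _ x0 (- M) Hx0). intros r Hr. apply HM, Hr.
Qed.

Lemma upper_approx a e : 0 <= a <= 1 -> 0 < e -> exists x, cut u a x /\ upper u a - e < x.
Proof.
  intros Ha. destruct (cut_bounds a Ha) as (x0 & M & Hx0 & HM).
  apply (real_Lub_Rbar_approx _ x0 M Hx0). intros r Hr. apply HM, Hr.
Qed.

Lemma lower_upper_antitone a b : 0 <= a -> a <= b -> b <= 1 ->
  lower u a <= lower u b /\ upper u b <= upper u a.
Proof.
  intros Ha ab Hb. split.
  - apply lower_greatest; [lra|]. intros x Hx.
    apply lower_le; [lra|]. apply (cut_antitone a b); auto.
  - apply upper_least; [lra|]. intros x Hx.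
    apply le_upper; [lra|]. apply (cut_antitone a b); auto.
Qed.

Lemma level_closed a x : 0 < a ->
  (forall e, 0 < e -> exists y, a <= u y /\ Rabs (y - x) < e) -> a <= u x.
Proof.
  destruct u_fuzzy as (_ & _ & _ & usc & _). intros Ha near. apply Rnot_lt_le. intros lt.
  destruct (usc x (a - u x)) as [del [Hdel close]]; [lra|].
  destruct (near del Hdel) as [y [Hy Hyx]]. specialize (close y Hyx). lra.
Qed.

Lemma lower_mem a : 0 < a <= 1 -> a <= u (lower u a).
Proof.
  intros Ha. apply level_closed; [lra|]. intros e He.
  destruct (lower_approx a e ltac:(lra) He) as [x [Hx lt]].
  pose proof (lower_le a x ltac:(lra) Hx). destruct Hx as [[_ Hx] | ?]; [|lra].
  exists x. split; [exact Hx|]. rewrite Rabs_right; lra.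
Qed.

Lemma upper_mem a : 0 < a <= 1 -> a <= u (upper u a).
Proof.
  intros Ha. apply level_closed; [lra|]. intros e He.
  destruct (upper_approx a e ltac:(lra) He) as [x [Hx lt]].
  pose proof (le_upper a x ltac:(lra) Hx). destruct Hx as [[_ Hx] | ?]; [|lra].
  exists x. split; [exact Hx|]. rewrite Rabs_left1; lra.
Qed.

Lemma fuzzy_quasiconcave s w v : s <= w <= v -> Rmin (u s) (u v) <= u w.
Proof.
  destruct u_fuzzy as (_ & _ & conv & _). intros Hw.
  destruct (Rle_lt_or_eq_dec s v ltac:(lra)) as [sv | <-];
    [|replace w with s by lra; apply Rmin_l].
  specialize (conv s v ((v - w) / (v - s))).
  replace ((v - w) / (v - s) * s + (1 - (v - w) / (v - s)) * v) with w in conv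
    by (field; lra).
  apply conv. split.
  - apply Rdiv_le_0_compat; lra.
  - apply (Rdiv_le_1 (v - w) (v - s)); lra.
Qed.

(* If there is no such [b], then [p := lower u a - e] has [b <= u p] for all [b < a]
   by quasiconcavity between [lower u b] and [lower u a]; so [p] lies in the [a]-cut,
   below its lower end. *)
Lemma lower_left_cont a e : 0 < a <= 1 -> 0 < e ->
  exists b, 0 < b < a /\ lower u a - e < lower u b.
Proof.
  intros Ha He. apply NNPP. intros none. set (p := lower u a - e).
  assert (a <= u p).
  { apply Rle_of_forall_lt_le; [lra|]. intros b Hb.
    assert (lower u b <= p) by (apply Rnot_lt_le; intros lt; apply none; eauto).
    pose proof (fuzzy_quasiconcave (lower u b) p (lower u a) ltac:(unfold p in *; lra)).
    pose proof (lower_mem b ltac:(lra)). pose proof (lower_mem a Ha).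
    unfold Rmin in *. destruct Rle_dec; lra. }
  pose proof (lower_le a p ltac:(lra) ltac:(left; lra)). unfold p in *. lra.
Qed.

Lemma upper_left_cont a e : 0 < a <= 1 -> 0 < e ->
  exists b, 0 < b < a /\ upper u b < upper u a + e.
Proof.
  intros Ha He. apply NNPP. intros none. set (p := upper u a + e).
  assert (a <= u p).
  { apply Rle_of_forall_lt_le; [lra|]. intros b Hb.
    assert (p <= upper u b) by (apply Rnot_lt_le; intros lt; apply none; eauto).
    pose proof (fuzzy_quasiconcave (upper u a) p (upper u b) ltac:(unfold p in *; lra)).
    pose proof (upper_mem b ltac:(lra)). pose proof (upper_mem a Ha).
    unfold Rmin in *. destruct Rle_dec; lra. }
  pose proof (le_upper a p ltac:(lra) ltac:(left; lra)). unfold p in *. lra.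
Qed.

Lemma support_endpoints e : 0 < e ->
  exists b, 0 < b <= 1 /\ lower u b < lower u 0 + e /\ upper u 0 - e < upper u b.
Proof.
  intros He. destruct u_fuzzy as [range _].
  destruct (lower_approx 0 e ltac:(lra) He) as [x [[[? _] | [_ ux]] Hx]]; [lra|].
  destruct (upper_approx 0 e ltac:(lra) He) as [y [[[? _] | [_ uy]] Hy]]; [lra|].
  set (b := Rmin (u x) (u y)).
  assert (0 < b) by (apply Rmin_glb_lt; lra).
  assert (b <= 1) by (pose proof (range x); pose proof (Rmin_l (u x) (u y)); unfold b; lra).
  exists b. split; [lra|].
  pose proof (lower_le b x ltac:(lra) ltac:(left; split; [lra | apply Rmin_l])).
  pose proof (le_upper b y ltac:(lra) ltac:(left; split; [lra | apply Rmin_r])).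
  lra.
Qed.

Lemma fuzzy_cut_family : cut_family (lower u) (upper u).
Proof.
  split.
  - exact lower_upper_antitone.
  - destruct (cut_nonempty 1) as [x Hx]; [lra|].
    pose proof (lower_le 1 x ltac:(lra) Hx). pose proof (le_upper 1 x ltac:(lra) Hx). lra.
  - intros a Ha e He.
    destruct (lower_left_cont a e Ha He) as [b1 [Hb1 L1]].
    destruct (upper_left_cont a e Ha He) as [b2 [Hb2 U2]].
    exists (Rmax b1 b2). pose proof (Rmax_l b1 b2). pose proof (Rmax_r b1 b2).
    assert (Rmax b1 b2 < a) by (apply Rmax_lub_lt; lra).
    destruct (lower_upper_antitone b1 (Rmax b1 b2)); try lra.
    destruct (lower_upper_antitone b2 (Rmax b1 b2)); lra.
  - exact support_endpoints.
Qed.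

Lemma fuzzy_endpoint_abs_le a : 0 <= a <= 1 ->
  Rabs (lower u a) <= Rabs (lower u 0) + Rabs (upper u 0) /\
  Rabs (upper u a) <= Rabs (lower u 0) + Rabs (upper u 0).
Proof.
  intros Ha. destruct (cut_family_bounds _ _ fuzzy_cut_family a Ha) as (? & ? & ?).
  unfold Rabs. repeat destruct Rcase_abs; lra.
Qed.
End FuzzyNumber.

Lemma cut_family_ext L U L' U' : cut_family L U ->
  (forall a, 0 <= a <= 1 -> L' a = L a /\ U' a = U a) -> cut_family L' U'.
Proof.
  intros [nested core left_cont support] same.
  split.
  - intros a b Ha ab Hb.
    destruct (same a) as [-> ->]; [lra|]. destruct (same b) as [-> ->]; [lra|]. auto.
  - destruct (same 1) as [-> ->]; [lra | exact core].
  - intros a Ha e He. destruct (left_cont a Ha e He) as [b [Hb ends]]. exists b.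
    destruct (same a) as [-> ->]; [lra|]. destruct (same b) as [-> ->]; lra.
  - intros e He. destruct (support e He) as [b [Hb ends]]. exists b.
    destruct (same 0) as [-> ->]; [lra|]. destruct (same b) as [-> ->]; lra.
Qed.

Lemma cut_family_const x : cut_family (fun _ => x) (fun _ => x).
Proof.
  split; intros; try lra.
  - exists (a / 2). lra.
  - exists 1. lra.
Qed.

Lemma cut_family_add L1 U1 L2 U2 : cut_family L1 U1 -> cut_family L2 U2 ->
  cut_family (fun a => L1 a + L2 a) (fun a => U1 a + U2 a).
Proof.
  intros [N1 C1 LC1 S1] [N2 C2 LC2 S2]. split.
  - intros a b Ha ab Hb. destruct (N1 a b), (N2 a b); auto. lra.
  - lra.
  - intros a Ha e He.
    destruct (LC1 a Ha (e / 2)) as [b1 [Hb1 E1]]; [lra|].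
    destruct (LC2 a Ha (e / 2)) as [b2 [Hb2 E2]]; [lra|].
    exists (Rmax b1 b2). pose proof (Rmax_l b1 b2). pose proof (Rmax_r b1 b2).
    assert (Rmax b1 b2 < a) by (apply Rmax_lub_lt; lra).
    destruct (N1 b1 (Rmax b1 b2)), (N2 b2 (Rmax b1 b2)); lra.
  - intros e He.
    destruct (S1 (e / 2)) as [b1 [Hb1 E1]]; [lra|].
    destruct (S2 (e / 2)) as [b2 [Hb2 E2]]; [lra|].
    exists (Rmin b1 b2). pose proof (Rmin_l b1 b2). pose proof (Rmin_r b1 b2).
    assert (0 < Rmin b1 b2) by (apply Rmin_glb_lt; lra).
    destruct (N1 (Rmin b1 b2) b1), (N2 (Rmin b1 b2) b2); lra.
Qed.

Lemma cut_family_scale_nonneg c L U : 0 <= c -> cut_family L U ->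
  cut_family (fun a => c * L a) (fun a => c * U a).
Proof.
  intros Hc [nested core left_cont support].
  assert (small : forall e, 0 < e -> 0 < e / (c + 1) /\ c * (e / (c + 1)) < e).
  { intros e He. split; [apply Rdiv_lt_0_compat; lra|].
    apply (Rmult_lt_reg_r (c + 1)); [lra|]. field_simplify; nra. }
  split.
  - intros a b Ha ab Hb. destruct (nested a b); auto. split; apply Rmult_le_compat_l; auto.
  - apply Rmult_le_compat_l; auto.
  - intros a Ha e He. destruct (small e He) as [He' ce'].
    destruct (left_cont a Ha (e / (c + 1)) He') as [b [Hb ends]]. exists b. nra.
  - intros e He. destruct (small e He) as [He' ce'].
    destruct (support (e / (c + 1)) He') as [b [Hb ends]]. exists b. nra.
Qed.

Lemma cut_family_opp L U : cut_family L U -> cut_family (fun a => - U a) (fun a => - L a).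
Proof.
  intros [nested core left_cont support]. split.
  - intros a b Ha ab Hb. destruct (nested a b); auto. lra.
  - lra.
  - intros a Ha e He. destruct (left_cont a Ha e He) as [b Hb]. exists b. lra.
  - intros e He. destruct (support e He) as [b Hb]. exists b. lra.
Qed.

Lemma cut_family_scale c L U : cut_family L U ->
  cut_family (fun a => Rmin (c * L a) (c * U a)) (fun a => Rmax (c * L a) (c * U a)).
Proof.
  intros LU. destruct (Rle_lt_dec 0 c) as [Hc | Hc].
  - apply (cut_family_ext _ _ _ _ (cut_family_scale_nonneg c L U Hc LU)).
    intros a Ha. destruct (cut_family_bounds L U LU a Ha) as (_ & LU_a & _).
    assert (c * L a <= c * U a) by (apply Rmult_le_compat_l; lra).
    rewrite Rmin_left, Rmax_right; auto.
  - pose proof (cut_family_opp _ _ (cut_family_scale_nonneg (- c) L U ltac:(lra) LU)) as opp.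
    apply (cut_family_ext _ _ _ _ opp).
    intros a Ha. destruct (cut_family_bounds L U LU a Ha) as (_ & LU_a & _).
    assert (c * U a <= c * L a) by (apply Rmult_le_compat_neg_l; lra).
    rewrite Rmin_right, Rmax_left; auto. split; ring.
Qed.

Lemma fadd_fuzzy u v : is_fuzzy u -> is_fuzzy v -> is_fuzzy (fadd u v).
Proof.
  intros Hu Hv. apply membership_fuzzy, cut_family_add; apply fuzzy_cut_family; assumption.
Qed.

Lemma fadd_endpoints u v a : is_fuzzy u -> is_fuzzy v -> 0 <= a <= 1 ->
  lower (fadd u v) a = lower u a + lower v a /\ upper (fadd u v) a = upper u a + upper v a.
Proof.
  intros Hu Hv.
  apply (membership_endpoints (fun a => lower u a + lower v a) (fun a => upper u a + upper v a)).
  apply cut_family_add; apply fuzzy_cut_family; assumption.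
Qed.

Lemma fscal_fuzzy c u : is_fuzzy u -> is_fuzzy (fscal c u).
Proof. intros Hu. apply membership_fuzzy, cut_family_scale, fuzzy_cut_family, Hu. Qed.

Lemma fscal_endpoints c u a : is_fuzzy u -> 0 <= a <= 1 ->
  lower (fscal c u) a = Rmin (c * lower u a) (c * upper u a) /\
  upper (fscal c u) a = Rmax (c * lower u a) (c * upper u a).
Proof.
  intros Hu. apply (membership_endpoints (fun a => Rmin (c * lower u a) (c * upper u a))
                                         (fun a => Rmax (c * lower u a) (c * upper u a))).
  apply cut_family_scale, fuzzy_cut_family, Hu.
Qed.

Definition crisp (x : R) : R -> R := membership (fun _ => x) (fun _ => x).

Lemma crisp_fuzzy x : is_fuzzy (crisp x).
Proof. apply membership_fuzzy, cut_family_const. Qed.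

Lemma crisp_endpoints x a : 0 <= a <= 1 -> lower (crisp x) a = x /\ upper (crisp x) a = x.
Proof. apply membership_endpoints, cut_family_const. Qed.

(** * The metric *)

Definition endpoint_gaps (u v : R -> R) (r : R) : Prop :=
  exists a, 0 <= a <= 1 /\
    r = Rmax (Rabs (lower u a - lower v a)) (Rabs (upper u a - upper v a)).

Lemma fdist_le u v D : (forall a, 0 <= a <= 1 ->
  Rabs (lower u a - lower v a) <= D /\ Rabs (upper u a - upper v a) <= D) -> fdist u v <= D.
Proof.
  intros gaps_le. unfold fdist. fold (endpoint_gaps u v).
  assert (le_D : forall r, endpoint_gaps u v r -> r <= D).
  { intros r [a [Ha ->]]. destruct (gaps_le a Ha). apply Rmax_lub; assumption. }
  assert (gap_0 : endpoint_gaps u v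
    (Rmax (Rabs (lower u 0 - lower v 0)) (Rabs (upper u 0 - upper v 0)))).
  { exists 0. split; [lra | reflexivity]. }
  exact (real_Lub_Rbar_least _ _ D gap_0 le_D D le_D).
Qed.

Lemma endpoint_gaps_le_fdist u v a : is_fuzzy u -> is_fuzzy v -> 0 <= a <= 1 ->
  Rabs (lower u a - lower v a) <= fdist u v /\ Rabs (upper u a - upper v a) <= fdist u v.
Proof.
  intros Hu Hv Ha. unfold fdist. fold (endpoint_gaps u v).
  set (B := Rabs (lower u 0) + Rabs (upper u 0) + (Rabs (lower v 0) + Rabs (upper v 0))).
  assert (le_B : forall r, endpoint_gaps u v r -> r <= B).
  { intros r [b [Hb ->]].
    destruct (fuzzy_endpoint_abs_le u Hu b Hb), (fuzzy_endpoint_abs_le v Hv b Hb).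
    unfold B. apply Rmax_lub; eapply Rle_trans; try apply Rabs_triang; rewrite Rabs_Ropp; lra. }
  assert (gap_a : endpoint_gaps u v
    (Rmax (Rabs (lower u a - lower v a)) (Rabs (upper u a - upper v a)))) by (exists a; auto).
  pose proof (real_Lub_Rbar_ub _ _ B gap_a le_B _ gap_a).
  pose proof (Rmax_l (Rabs (lower u a - lower v a)) (Rabs (upper u a - upper v a))).
  pose proof (Rmax_r (Rabs (lower u a - lower v a)) (Rabs (upper u a - upper v a))).
  lra.
Qed.

Lemma fdist_nonneg u v : is_fuzzy u -> is_fuzzy v -> 0 <= fdist u v.
Proof.
  intros Hu Hv. destruct (endpoint_gaps_le_fdist u v 0 Hu Hv) as [gap _]; [lra|].
  pose proof (Rabs_pos (lower u 0 - lower v 0)). lra.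
Qed.

Lemma fdist_fadd_le u u' v v' : is_fuzzy u -> is_fuzzy u' -> is_fuzzy v -> is_fuzzy v' ->
  fdist (fadd u u') (fadd v v') <= fdist u v + fdist u' v'.
Proof.
  intros Hu Hu' Hv Hv'. apply fdist_le. intros a Ha.
  destruct (fadd_endpoints u u' a Hu Hu' Ha) as [-> ->].
  destruct (fadd_endpoints v v' a Hv Hv' Ha) as [-> ->].
  destruct (endpoint_gaps_le_fdist u v a Hu Hv Ha).
  destruct (endpoint_gaps_le_fdist u' v' a Hu' Hv' Ha).
  split.
  - replace (lower u a + lower u' a - (lower v a + lower v' a))
      with ((lower u a - lower v a) + (lower u' a - lower v' a)) by ring.
    eapply Rle_trans; [apply Rabs_triang | lra].
  - replace (upper u a + upper u' a - (upper v a + upper v' a))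
      with ((upper u a - upper v a) + (upper u' a - upper v' a)) by ring.
    eapply Rle_trans; [apply Rabs_triang | lra].
Qed.

Lemma fdist_fscal_le c u v : is_fuzzy u -> is_fuzzy v ->
  fdist (fscal c u) (fscal c v) <= Rabs c * fdist u v.
Proof.
  intros Hu Hv. apply fdist_le. intros a Ha.
  destruct (fscal_endpoints c u a Hu Ha) as [-> ->].
  destruct (fscal_endpoints c v a Hv Ha) as [-> ->].
  destruct (endpoint_gaps_le_fdist u v a Hu Hv Ha) as [gap_l gap_u].
  destruct (cut_family_bounds _ _ (fuzzy_cut_family u Hu) a Ha) as (_ & Hu_a & _).
  destruct (cut_family_bounds _ _ (fuzzy_cut_family v Hv) a Ha) as (_ & Hv_a & _).
  pose proof (Rabs_pos c).
  destruct (Rle_lt_dec 0 c) as [Hc | Hc].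
  - rewrite !Rmin_left, !Rmax_right by (apply Rmult_le_compat_l; lra).
    rewrite <- !Rmult_minus_distr_l, !Rabs_mult. split; apply Rmult_le_compat_l; assumption.
  - rewrite !Rmin_right, !Rmax_left by (apply Rmult_le_compat_neg_l; lra).
    rewrite <- !Rmult_minus_distr_l, !Rabs_mult. split; apply Rmult_le_compat_l; assumption.
Qed.

Lemma crisp_fdist_le x y : fdist (crisp x) (crisp y) <= Rabs (x - y).
Proof.
  apply fdist_le. intros a Ha.
  destruct (crisp_endpoints x a Ha) as [-> ->], (crisp_endpoints y a Ha) as [-> ->]. lra.
Qed.

Lemma crisp_fdist_ge x v : is_fuzzy v -> Rabs (x - lower v 0) <= fdist (crisp x) v.
Proof.
  intros Hv. destruct (crisp_endpoints x 0) as [Ex _]; [lra|].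
  destruct (endpoint_gaps_le_fdist _ _ 0 (crisp_fuzzy x) Hv) as [gap _]; [lra|].
  rewrite Ex in gap. exact gap.
Qed.

(** * Weighted window means *)

Lemma in_window_bounds beta gamma n k : in_window beta gamma n k = true ->
  beta n <= INR k <= gamma n.
Proof.
  unfold in_window. destruct Rle_dec; [|discriminate]. destruct Rle_dec; [auto | discriminate].
Qed.

Section WindowSum.
Variables beta gamma : nat -> R.

Lemma wsum_ext g h n : (forall k, g k = h k) -> wsum beta gamma g n = wsum beta gamma h n.
Proof. intros same. apply sum_eq. intros k _. now rewrite same. Qed.

Lemma wsum_le g h n : (forall k, in_window beta gamma n k = true -> g k <= h k) ->
  wsum beta gamma g n <= wsum beta gamma h n.
Proof.
  intros le. apply sum_Rle. intros k _.
  destruct (in_window beta gamma n k) eqn:Hk; [apply le, Hk | lra].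
Qed.

Lemma wsum_nonneg g n : (forall k, in_window beta gamma n k = true -> 0 <= g k) ->
  0 <= wsum beta gamma g n.
Proof.
  intros pos. apply cond_pos_sum. intros k.
  destruct (in_window beta gamma n k) eqn:Hk; [apply pos, Hk | lra].
Qed.

Lemma wsum_plus g h n :
  wsum beta gamma (fun k => g k + h k) n = wsum beta gamma g n + wsum beta gamma h n.
Proof.
  unfold wsum. rewrite <- plus_sum. apply sum_eq. intros k _.
  destruct (in_window beta gamma n k); ring.
Qed.

Lemma wsum_scal c g n : wsum beta gamma (fun k => c * g k) n = c * wsum beta gamma g n.
Proof.
  unfold wsum. rewrite scal_sum. apply sum_eq. intros k _.
  destruct (in_window beta gamma n k); ring.
Qed.
End WindowSum.

(* The third clause of [InN] reads [is_lim_seq (wmean beta gamma t theta d) 0]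
   with [d k := fdist (fs k x) (f x)]. *)
Definition wmean (beta gamma t : nat -> R) (theta : R) (d : nat -> R) (n : nat) : R :=
  / Rpower (Tbg beta gamma t n) theta * wsum beta gamma (fun k => t k * d k) n.

Lemma Rpower_inv_pos x theta : 0 < / Rpower x theta.
Proof. apply Rinv_0_lt_compat, exp_pos. Qed.

Section WeightedMean.
Variables beta gamma t : nat -> R.
Hypothesis t_pos : forall k, 0 < t k.

Lemma wmean_nonneg theta d n : (forall k, 0 <= d k) -> 0 <= wmean beta gamma t theta d n.
Proof.
  intros pos. apply Rmult_le_pos; [apply Rlt_le, Rpower_inv_pos|].
  apply wsum_nonneg. intros k _. apply Rmult_le_pos; [apply Rlt_le, t_pos | apply pos].
Qed.

Lemma wmean_le theta d d' n : (forall k, d k <= d' k) ->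
  wmean beta gamma t theta d n <= wmean beta gamma t theta d' n.
Proof.
  intros le. apply Rmult_le_compat_l; [apply Rlt_le, Rpower_inv_pos|].
  apply wsum_le. intros k _. apply Rmult_le_compat_l; [apply Rlt_le, t_pos | apply le].
Qed.

Lemma wmean_plus theta d d' n : wmean beta gamma t theta (fun k => d k + d' k) n =
  wmean beta gamma t theta d n + wmean beta gamma t theta d' n.
Proof.
  unfold wmean. rewrite <- Rmult_plus_distr_l, <- wsum_plus. f_equal.
  apply wsum_ext. intros k. ring.
Qed.

Lemma wmean_scal theta c d n :
  wmean beta gamma t theta (fun k => c * d k) n = c * wmean beta gamma t theta d n.
Proof.
  unfold wmean. rewrite (wsum_ext beta gamma (fun k => t k * (c * d k)) (fun k => c * (t k * d k)))
    by (intros; ring).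
  rewrite wsum_scal. ring.
Qed.

Lemma is_lim_wmean_dominated theta d d' : (forall k, 0 <= d k <= d' k) ->
  is_lim_seq (wmean beta gamma t theta d') 0 -> is_lim_seq (wmean beta gamma t theta d) 0.
Proof.
  intros dom lim'.
  apply (is_lim_seq_le_le (fun _ => 0) _ (wmean beta gamma t theta d') 0);
    [|apply is_lim_seq_const | exact lim'].
  intros n. split; [apply wmean_nonneg | apply wmean_le]; apply dom.
Qed.

Lemma wmean_exponent_antitone theta delta d n : theta <= delta ->
  1 <= Tbg beta gamma t n -> (forall k, 0 <= d k) ->
  wmean beta gamma t delta d n <= wmean beta gamma t theta d n.
Proof.
  intros le T_ge pos. unfold wmean. apply Rmult_le_compat_r.
  - apply wsum_nonneg. intros k _. apply Rmult_le_pos; [apply Rlt_le, t_pos | apply pos].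
  - apply Rinv_le_contravar; [apply exp_pos | apply Rle_Rpower; assumption].
Qed.

Lemma wmean_one_const c n : 0 < Tbg beta gamma t n -> wmean beta gamma t 1 (fun _ => c) n = c.
Proof.
  intros T_pos. unfold wmean. rewrite Rpower_1 by exact T_pos.
  rewrite (wsum_ext beta gamma (fun k => t k * c) (fun k => c * t k)) by (intros; ring).
  rewrite wsum_scal. fold (Tbg beta gamma t n). field. lra.
Qed.

Lemma wsum_ge_const c d n : (forall k, in_window beta gamma n k = true -> c <= d k) ->
  c * Tbg beta gamma t n <= wsum beta gamma (fun k => t k * d k) n.
Proof.
  intros le. unfold Tbg. rewrite <- wsum_scal. apply wsum_le. intros k Hk.
  rewrite Rmult_comm. apply Rmult_le_compat_l; [apply Rlt_le, t_pos | apply le, Hk].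
Qed.
End WeightedMean.

Section StatisticalConvergence.
Variables (beta gamma t : nat -> R) (a b : R).
Hypothesis t_pos : forall k, 0 < t k.

Lemma InN_fadd theta fs gs f g :
  InN theta beta gamma t a b fs f -> InN theta beta gamma t a b gs g ->
  InN theta beta gamma t a b (fun k x => fadd (fs k x) (gs k x)) (fun x => fadd (f x) (g x)).
Proof.
  intros (fs_fuzzy & f_fuzzy & lim_f) (gs_fuzzy & g_fuzzy & lim_g).
  split; [|split]; [intros; apply fadd_fuzzy; auto .. |].
  intros x Hx. pose proof (is_lim_seq_plus' _ _ _ _ (lim_f x Hx) (lim_g x Hx)) as lim.
  rewrite Rplus_0_r in lim.
  apply (is_lim_wmean_dominated beta gamma t t_pos theta _
           (fun k => fdist (fs k x) (f x) + fdist (gs k x) (g x))).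
  - intros k. split; [apply fdist_nonneg; apply fadd_fuzzy; auto | apply fdist_fadd_le; auto].
  - eapply is_lim_seq_ext; [|exact lim]. intros n. symmetry. apply wmean_plus.
Qed.

Lemma InN_fscal theta c fs f : InN theta beta gamma t a b fs f ->
  InN theta beta gamma t a b (fun k x => fscal c (fs k x)) (fun x => fscal c (f x)).
Proof.
  intros (fs_fuzzy & f_fuzzy & lim_f).
  split; [|split]; [intros; apply fscal_fuzzy; auto .. |].
  intros x Hx. pose proof (is_lim_seq_scal_l _ (Rabs c) _ (lim_f x Hx)) as lim.
  simpl in lim. rewrite Rmult_0_r in lim.
  apply (is_lim_wmean_dominated beta gamma t t_pos theta _
           (fun k => Rabs c * fdist (fs k x) (f x))).
  - intros k. split; [apply fdist_nonneg; apply fscal_fuzzy; auto | apply fdist_fscal_le; auto].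
  - eapply is_lim_seq_ext; [|exact lim]. intros n. symmetry. apply wmean_scal.
Qed.

Hypothesis T_lim : is_lim_seq (Tbg beta gamma t) p_infty.

Lemma InN_exponent_mono theta delta fs f : theta <= delta ->
  InN theta beta gamma t a b fs f -> InN delta beta gamma t a b fs f.
Proof.
  intros le (fs_fuzzy & f_fuzzy & lim_f). split; [|split]; auto.
  intros x Hx.
  set (d := fun k => fdist (fs k x) (f x)).
  apply (is_lim_seq_le_le_loc (fun _ => 0) _ (wmean beta gamma t theta d) 0);
    [|apply is_lim_seq_const | exact (lim_f x Hx)].
  destruct (proj2 (is_lim_seq_spec _ _) T_lim 1) as [N HN]. exists N. intros n Hn.
  assert (d_pos : forall k, 0 <= d k) by (intros; apply fdist_nonneg; auto).
  split; [apply wmean_nonneg; auto|].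
  apply wmean_exponent_antitone; auto. apply Rlt_le, HN, Hn.
Qed.
End StatisticalConvergence.

(** * A sequence in N^1 outside N^(1/2) *)

Lemma le_0_of_is_lim_seq_0 c s : is_lim_seq s 0 -> eventually (fun n => c <= s n) -> c <= 0.
Proof.
  intros lim ev. exact (is_lim_seq_le_loc (fun _ => c) s c 0 ev (is_lim_seq_const c) lim).
Qed.

Lemma sum_f_R0_if_le (t : nat -> R) K N :
  sum_f_R0 (fun k => if (k <=? K)%nat then t k else 0) N = sum_f_R0 t (Nat.min N K).
Proof.
  induction N as [|N IH]; [reflexivity|].
  rewrite tech5, IH. destruct (S N <=? K)%nat eqn:SN.
  - apply Nat.leb_le in SN. rewrite !Nat.min_l by lia. now rewrite tech5.
  - apply Nat.leb_gt in SN. rewrite !Nat.min_r by lia. ring.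
Qed.

Lemma wsum_head_le beta gamma (t : nat -> R) K n : (forall k, 0 <= t k) ->
  wsum beta gamma (fun k => if (k <=? K)%nat then t k else 0) n <= sum_f_R0 t K.
Proof.
  intros pos. unfold wsum. set (M := Z.to_nat (up (gamma n))).
  apply Rle_trans with (sum_f_R0 (fun k => if (k <=? K)%nat then t k else 0) M).
  - apply sum_Rle. intros k _.
    destruct (in_window beta gamma n k), (k <=? K)%nat; try lra. apply pos.
  - rewrite sum_f_R0_if_le. destruct (Nat.le_ge_cases M K).
    + rewrite Nat.min_l by assumption. apply (tech9 (sum_f_R0 t)); [|assumption].
      intros m. rewrite tech5. pose proof (pos (S m)). lra.
    + rewrite Nat.min_r by assumption. lra.
Qed.

Definition inv_sqrt_clamp (T : R) : R := / Rmax 1 (sqrt T).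

Lemma inv_sqrt_clamp_range T : 0 < inv_sqrt_clamp T <= 1.
Proof.
  unfold inv_sqrt_clamp. pose proof (Rmax_l 1 (sqrt T)). split.
  - apply Rinv_0_lt_compat. lra.
  - rewrite <- Rinv_1 at 2. apply Rinv_le_contravar; lra.
Qed.

Lemma inv_sqrt_clamp_mul T : 1 <= T -> inv_sqrt_clamp T * T = sqrt T.
Proof.
  intros T_ge. unfold inv_sqrt_clamp.
  assert (1 <= sqrt T) by (rewrite <- sqrt_1; apply sqrt_le_1_alt; lra).
  rewrite Rmax_right by lra. rewrite <- (sqrt_sqrt T) at 2 by lra. field. lra.
Qed.

Lemma inv_sqrt_clamp_le c T : 0 < c -> (/ c) ^ 2 <= T -> inv_sqrt_clamp T <= c.
Proof.
  intros Hc T_ge. unfold inv_sqrt_clamp.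
  assert (/ c <= sqrt T).
  { rewrite <- (sqrt_pow2 (/ c)) by (apply Rlt_le, Rinv_0_lt_compat, Hc).
    apply sqrt_le_1_alt, T_ge. }
  rewrite <- (Rinv_inv c). apply Rinv_le_contravar; [apply Rinv_0_lt_compat, Hc|].
  pose proof (Rmax_r 1 (sqrt T)). lra.
Qed.

Definition window_weights (beta gamma T : nat -> R) (k : nat) (r : R) : Prop :=
  r = 0 \/ exists n, in_window beta gamma n k = true /\ r = inv_sqrt_clamp (T n).

Definition envelope (beta gamma T : nat -> R) (k : nat) : R :=
  real (Lub_Rbar (window_weights beta gamma T k)).

Section Envelope.
Variables beta gamma T : nat -> R.

Lemma window_weights_le_1 k r : window_weights beta gamma T k r -> r <= 1.
Proof. intros [-> | [n [_ ->]]]; [lra | apply inv_sqrt_clamp_range]. Qed.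

Lemma envelope_ge n k : in_window beta gamma n k = true ->
  inv_sqrt_clamp (T n) <= envelope beta gamma T k.
Proof.
  intros Hk. apply (real_Lub_Rbar_ub _ 0 1 (or_introl eq_refl) (window_weights_le_1 k)).
  right. eauto.
Qed.

Lemma envelope_range k : 0 <= envelope beta gamma T k <= 1.
Proof.
  split.
  - apply (real_Lub_Rbar_ub _ 0 1 (or_introl eq_refl) (window_weights_le_1 k)). now left.
  - apply (real_Lub_Rbar_least _ 0 1 (or_introl eq_refl) (window_weights_le_1 k)).
    apply window_weights_le_1.
Qed.

Hypothesis gamma_mono : forall n, gamma n <= gamma (S n).

(* Windows containing [k > gamma N] have index [n > N], by monotonicity of [gamma]. *)
Lemma envelope_le_tail c N k : 0 <= c ->
  (forall m, (N <= m)%nat -> inv_sqrt_clamp (T m) <= c) ->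
  (Z.to_nat (up (gamma N)) < k)%nat -> envelope beta gamma T k <= c.
Proof.
  intros Hc tail Hk.
  apply (real_Lub_Rbar_least _ 0 1 (or_introl eq_refl) (window_weights_le_1 k)).
  intros r [-> | [m [Hm ->]]]; [exact Hc|]. apply tail.
  destruct (le_lt_dec N m) as [|lt]; [assumption | exfalso].
  assert (gamma m <= gamma N) by (apply (tech9 gamma gamma_mono); lia).
  apply in_window_bounds in Hm. apply lt_INR in Hk.
  pose proof (archimed (gamma N)).
  assert (IZR (up (gamma N)) <= INR (Z.to_nat (up (gamma N)))).
  { rewrite INR_IZR_INZ. apply IZR_le. lia. }
  lra.
Qed.
End Envelope.

Section Strictness.
Variables (beta gamma t : nat -> R) (a b : R).
Hypothesis t_pos : forall k, 0 < t k.
Hypothesis gamma_mono : forall n, gamma n <= gamma (S n).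
Hypothesis T_lim : is_lim_seq (Tbg beta gamma t) p_infty.

Let T := Tbg beta gamma t.
Let e := envelope beta gamma T.

Lemma eventually_T_gt M : eventually (fun n => M < T n).
Proof. exact (proj2 (is_lim_seq_spec _ _) T_lim M). Qed.

Lemma wsum_envelope_le c N n : 0 <= c ->
  (forall m, (N <= m)%nat -> inv_sqrt_clamp (T m) <= c) ->
  wsum beta gamma (fun k => t k * e k) n <= c * T n + sum_f_R0 t (Z.to_nat (up (gamma N))).
Proof.
  intros Hc tail. set (K := Z.to_nat (up (gamma N))).
  apply Rle_trans with
    (wsum beta gamma (fun k => c * t k + (if (k <=? K)%nat then t k else 0)) n).
  - apply wsum_le. intros k _. pose proof (t_pos k). pose proof (envelope_range beta gamma T k).
    destruct (k <=? K)%nat eqn:Hk.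
    + assert (t k * e k <= t k) by (unfold e; nra). nra.
    + apply Nat.leb_gt in Hk.
      pose proof (envelope_le_tail beta gamma T gamma_mono c N k Hc tail Hk). unfold e. nra.
  - rewrite wsum_plus, wsum_scal. apply Rplus_le_compat_l, wsum_head_le.
    intros k. apply Rlt_le, t_pos.
Qed.

Lemma is_lim_wmean_envelope : is_lim_seq (wmean beta gamma t 1 e) 0.
Proof.
  apply is_lim_seq_spec. intros eps. pose proof (cond_pos eps) as eps_pos.
  destruct (eventually_T_gt ((/ (eps / 2)) ^ 2)) as [N1 HN1].
  set (C := sum_f_R0 t (Z.to_nat (up (gamma N1)))).
  destruct (eventually_T_gt (Rmax 1 (2 * C / eps))) as [N2 HN2].
  exists (Nat.max N1 N2). intros n Hn.
  assert (tail : forall m, (N1 <= m)%nat -> inv_sqrt_clamp (T m) <= eps / 2).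
  { intros m Hm. apply inv_sqrt_clamp_le; [lra|]. apply Rlt_le, HN1, Hm. }
  pose proof (wsum_envelope_le (eps / 2) N1 n ltac:(lra) tail) as sum_le. fold C in sum_le.
  specialize (HN2 n ltac:(lia)).
  pose proof (Rmax_l 1 (2 * C / eps)). pose proof (Rmax_r 1 (2 * C / eps)).
  assert (C < eps / 2 * T n).
  { apply (Rmult_lt_reg_r (2 / eps)); [apply Rdiv_lt_0_compat; lra|].
    replace (eps / 2 * T n * (2 / eps)) with (T n) by (field; lra). lra. }
  assert (mean_nonneg : 0 <= wmean beta gamma t 1 e n).
  { apply wmean_nonneg; [exact t_pos|]. intros k. apply envelope_range. }
  rewrite Rminus_0_r, Rabs_right by lra.
  unfold wmean. fold T. rewrite Rpower_1 by lra. rewrite Rmult_comm.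
  apply Rlt_div_l; lra.
Qed.

Lemma InN_one_crisp_envelope :
  InN 1 beta gamma t a b (fun k _ => crisp (e k)) (fun _ => crisp 0).
Proof.
  split; [|split]; [intros; apply crisp_fuzzy ..|]. intros x _.
  change (is_lim_seq (wmean beta gamma t 1 (fun k => fdist (crisp (e k)) (crisp 0))) 0).
  apply (is_lim_wmean_dominated beta gamma t t_pos 1 _ e); [|exact is_lim_wmean_envelope].
  intros k. pose proof (envelope_range beta gamma T k).
  split; [apply fdist_nonneg; apply crisp_fuzzy|].
  eapply Rle_trans; [apply crisp_fdist_le|]. rewrite Rminus_0_r, Rabs_right; unfold e; lra.
Qed.

(* The mean of [|lower (g x) 0| <= e k + d k] tends to 0. *)
Lemma InN_one_crisp_envelope_lower g x : a <= x <= b ->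
  InN 1 beta gamma t a b (fun k _ => crisp (e k)) g -> lower (g x) 0 = 0.
Proof.
  intros Hx (_ & g_fuzzy & lim_g). specialize (lim_g x Hx).
  set (l := lower (g x) 0). set (d := fun k => fdist (crisp (e k)) (g x)).
  assert (l_le : forall k, Rabs l <= e k + d k).
  { intros k. pose proof (crisp_fdist_ge (e k) (g x) (g_fuzzy x Hx)) as gap. fold l in gap.
    pose proof (envelope_range beta gamma T k) as e_range. change (0 <= e k <= 1) in e_range.
    pose proof (Rabs_triang_inv l (e k)) as tri.
    rewrite Rabs_minus_sym, (Rabs_right (e k)) in tri by lra. unfold d. lra. }
  assert (abs_l_le : Rabs l <= 0).
  { apply (le_0_of_is_lim_seq_0 _ (wmean beta gamma t 1 (fun k => e k + d k))).
    - eapply is_lim_seq_ext; [intros n; symmetry; apply wmean_plus|].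
      rewrite <- (Rplus_0_r 0). apply (is_lim_seq_plus' _ _ _ _ is_lim_wmean_envelope lim_g).
    - destruct (eventually_T_gt 0) as [N HN]. exists N. intros n Hn.
      rewrite <- (wmean_one_const beta gamma t (Rabs l) n) by apply HN, Hn.
      apply wmean_le; [exact t_pos | exact l_le]. }
  apply Rabs_le_between in abs_l_le. lra.
Qed.

Lemma not_InN_half_crisp_envelope : a <= b ->
  ~ exists g, InN (/ 2) beta gamma t a b (fun k _ => crisp (e k)) g.
Proof.
  intros ab [g Hg]. assert (Ha : a <= a <= b) by lra.
  pose proof (InN_one_crisp_envelope_lower g a Ha
    (InN_exponent_mono beta gamma t a b t_pos T_lim (/ 2) 1 _ g ltac:(lra) Hg)) as l0.
  destruct Hg as (_ & g_fuzzy & lim_g). specialize (lim_g a Ha).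
  set (d := fun k => fdist (crisp (e k)) (g a)).
  assert (e_le : forall k, e k <= d k).
  { intros k. pose proof (crisp_fdist_ge (e k) (g a) (g_fuzzy a Ha)) as ge.
    rewrite l0, Rminus_0_r in ge. pose proof (Rle_abs (e k)). unfold d. lra. }
  enough (1 <= 0) by lra.
  apply (le_0_of_is_lim_seq_0 _ (wmean beta gamma t (/ 2) d) lim_g).
  destruct (eventually_T_gt 1) as [N HN]. exists N. intros n Hn. specialize (HN n Hn).
  fold T in HN. unfold wmean. fold T. rewrite Rpower_sqrt by lra.
  assert (sqrt_T_pos : 0 < sqrt (T n)) by (apply sqrt_lt_R0; lra).
  rewrite <- (Rinv_l (sqrt (T n))) by lra.
  apply Rmult_le_compat_l; [apply Rlt_le, Rinv_0_lt_compat; lra|].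
  rewrite <- inv_sqrt_clamp_mul by lra. apply wsum_ge_const; [exact t_pos|].
  intros k Hk. eapply Rle_trans; [apply (envelope_ge beta gamma T n k Hk) | apply e_le].
Qed.
End Strictness.

Theorem theorem3p1 (beta gamma t : nat -> R) (a b : R)
  (hab : a < b)
  (hbeta_pos : forall n, 0 < beta n)
  (hgamma_pos : forall n, 0 < gamma n)
  (hbeta_mono : forall n, beta n <= beta (S n))
  (hgamma_mono : forall n, gamma n <= gamma (S n))
  (hbg : forall n, beta n <= gamma n)
  (hdiff : is_lim_seq (fun n => gamma n - beta n) p_infty)
  (ht_pos : forall k, 0 < t k)
  (hT : is_lim_seq (Tbg beta gamma t) p_infty) :
  (* (i) *)
  (forall theta, 0 < theta <= 1 ->
   forall (fs gs : nat -> R -> R -> R) (f g : R -> R -> R),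
     InN theta beta gamma t a b fs f ->
     InN theta beta gamma t a b gs g ->
     InN theta beta gamma t a b (fun k x => fadd (fs k x) (gs k x))
                                (fun x => fadd (f x) (g x)) /\
     (forall c : R,
        InN theta beta gamma t a b (fun k x => fscal c (fs k x))
                                   (fun x => fscal c (f x)))) /\
  (* (ii) inclusion *)
  (forall theta delta, 0 < theta -> theta <= delta -> delta <= 1 ->
   forall (fs : nat -> R -> R -> R) (f : R -> R -> R),
     InN theta beta gamma t a b fs f -> InN delta beta gamma t a b fs f) /\
  (* (ii) strictness for some theta < delta *)
  (exists theta delta, 0 < theta /\ theta < delta /\ delta <= 1 /\
     exists fs : nat -> R -> R -> R,
       (exists f, InN delta beta gamma t a b fs f) /\
       ~ (exists g, InN theta beta gamma t a b fs g)).
Proof.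
  split; [|split].
  - intros theta _ fs gs f g Hf Hg.
    split; [apply InN_fadd | intros c; apply InN_fscal]; assumption.
  - intros theta delta _ le _ fs f. apply InN_exponent_mono; assumption.
  - exists (/ 2), 1. split; [lra | split; [lra | split; [lra |]]].
    exists (fun k _ => crisp (envelope beta gamma (Tbg beta gamma t) k)). split.
    + eexists. apply InN_one_crisp_envelope; assumption.
    + apply not_InN_half_crisp_envelope; [assumption .. | lra].
Qed.
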